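(* Let $m,n\ge 1$ and $k\ge 2$, and let $q_k=\lfloor mk/(m+1)\rfloor$. Let $a_{k,0,m}$ and $a_{k,l,r}$ be the coefficients of the expansion defined below. Expand $$P(\mathbf x)=\prod_{i=1}^n\big((x_i-1)^{\underline m}\big)^k=\prod_{i=1}^n\Big(a_{k,0,m}(x_i-1)^{\underline m}+\sum_{l=1}^{q_k}\sum_{r=0}^m a_{k,l,r}\big((x_i)^{\underline{m+1}}\big)^l(x_i+r-m-1)^{\underline r}\Big)$$ as a sum of terms $$c\prod_{i=1}^n\big((x_i)^{\underline{m+1}}\big)^{l_i}(x_i+r_i-m-1)^{\underline{r_i}},\qquad 0\le l_i\le q_k,\ 0\le r_i\le m,$$ where $r_i=m$ whenever $l_i=0$, and $c$ is the corresponding product of coefficients. Let $P_1$ be the sum of those terms with $\sum_i l_i\le k-1$ and total degree $\sum_i((m+1)l_i+r_i)\le mn+(m+1)(k-1)-1$. Then $P_1=P_0$, where $P_0$ is the unique polynomial in $V_{m,k}$ such that $P-P_0$ has a zero of multiplicity at least $k$ at every point of $mB^n\setminus\{\mathbf 0\}$ and a zero of multiplicity at least $k-1$ at $\mathbf 0$.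
   Context: The coefficients are defined as follows: $a_{k,0,m}$ and $a_{k,l,r}$ ($1\le l\le q_k$, $0\le r\le m$) are the unique reals with $$\big((x-1)^{\underline m}\big)^k=a_{k,0,m}(x-1)^{\underline m}+\sum_{l=1}^{q_k}\sum_{r=0}^m a_{k,l,r}\big((x)^{\underline{m+1}}\big)^l(x+r-m-1)^{\underline r}$$ in $\mathbb{R}[x]$. $mB^n=\{0,1,\ldots,m\}^n$. Falling factorials are $(y)^{\underline 0}=1$ and $(y)^{\underline j}=y(y-1)\cdots(y-j+1)$. A polynomial has a zero of multiplicity at least $k$ at $\mathbf a$ if all its partial derivatives of order less than $k$ vanish at $\mathbf a$. For an integer $k\ge 2$, a polynomial $Q$ is called $(m,k)$-reduced if two conditions hold: $\deg Q\le mn+(m+1)(k-1)-1$, and no monomial of $Q$ is divisible by $x_{i_1}^{m+1}\cdots x_{i_k}^{m+1}$ for any indices $i_1,\ldots,i_k$ (not necessarily distinct). $V_{m,k}$ is the space of $(m,k)$-reduced polynomials. *)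

From HB Require Import structures.
From mathcomp Require Import all_boot all_order all_algebra.
From mathcomp Require Import mpoly.
Set Implicit Arguments. Unset Strict Implicit. Unset Printing Implicit Defensive.
Import Order.TTheory GRing.Theory Num.Theory.
Local Open Scope ring_scope.

Definition ffact (T : nzRingType) (y : T) (j : nat) : T :=
  \prod_(t < j) (y - t%:R).

Definition qk (m k : nat) : nat := (m * k %/ m.+1)%N.

(* the univariate identity defining a_{k,0,m} (= a0) and a_{k,l,r} (= a l r) *)
Definition coeff_identity (R : realFieldType) (m k : nat) (a0 : R)
    (a : nat -> nat -> R) : Prop :=
  ffact ('X - 1 : {poly R}) m ^+ k =
    a0 *: ffact ('X - 1) m
    + \sum_(1 <= l < (qk m k).+1) \sum_(r < m.+1)
        a l r *: (ffact ('X : {poly R}) m.+1 ^+ l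
                  * ffact ('X + (r%:R - m.+1%:R)%:P) r).

Definition degbound (n m k : nat) : nat := (m * n + m.+1 * (k - 1) - 1)%N.

Definition Ppoly (R : realFieldType) (n m k : nat) : {mpoly R[n]} :=
  \prod_(i < n) ffact ('X_i - 1) m ^+ k.

Definition term (R : realFieldType) (n m : nat) (i : 'I_n) (l r : nat)
    : {mpoly R[n]} :=
  ffact 'X_i m.+1 ^+ l * ffact ('X_i + (r%:R - m.+1%:R)%:MP) r.

Definition choice_coef (R : realFieldType) (a0 : R) (a : nat -> nat -> R)
    (l r : nat) : R :=
  if l == 0%N then a0 else a l r.

(* P_1: sum of the terms of the expansion with sum l_i <= k-1 and
   total degree sum ((m+1) l_i + r_i) <= mn + (m+1)(k-1) - 1.
   A term is indexed by f : i |-> (l_i, r_i) with 0 <= l_i <= q_k,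
   0 <= r_i <= m and r_i = m whenever l_i = 0. *)
Definition P1poly (R : realFieldType) (n m k : nat) (a0 : R)
    (a : nat -> nat -> R) : {mpoly R[n]} :=
  \sum_(f : {ffun 'I_n -> 'I_(qk m k).+1 * 'I_m.+1}
        | [forall i, ((f i).1 == 0 :> nat) ==> ((f i).2 == m :> nat)]
          && (\sum_(i < n) (f i).1 <= k - 1)%N
          && (\sum_(i < n) (m.+1 * (f i).1 + (f i).2) <= degbound n m k)%N)
     (\prod_(i < n) choice_coef a0 a (f i).1 (f i).2)
       *: \prod_(i < n) term R m i (f i).1 (f i).2.

Definition has_zero_mult (R : realFieldType) (n : nat) (Q : {mpoly R[n]})
    (x : 'I_n -> R) (k : nat) : Prop :=
  forall alpha : 'X_{1..n}, (mdeg alpha < k)%N -> (mderivm alpha Q).@[x] = 0.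

(* (m,k)-reduced polynomials (the space V_{m,k}) *)
Definition reduced (R : realFieldType) (n m k : nat) (Q : {mpoly R[n]}) : Prop :=
  forall mon : 'X_{1..n}, mon \in msupp Q ->
    (mdeg mon <= degbound n m k)%N /\
    forall idx : 'I_k -> 'I_n,
      ~~ (\sum_(j < k) (U_(idx j) *+ m.+1) <= mon)%MM.

Definition interp_cond (R : realFieldType) (n m k : nat) (Q : {mpoly R[n]})
    : Prop :=
  (forall p : 'I_n -> 'I_m.+1, (exists i, p i != 0 :> nat) ->
      has_zero_mult (Ppoly R n m k - Q) (fun i => (p i)%:R) k)
  /\ has_zero_mult (Ppoly R n m k - Q) (fun _ => 0) (k - 1).

(* Let b_{l,r} = ((x)_{m+1})^l (x+r-m-1)_r ([bpoly]): it is monic of degree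
   (m+1)l + r and vanishes at p in {0..m} to order >= l + [m - r < p]. Calling a
   degree vector s admissible when |s| <= mn + (m+1)(k-1) - 1 and
   sum_i s_i div (m+1) < k, P_1 keeps exactly the terms of the expansion of P
   with admissible degree vector. Every discarded term vanishes to order >= k at
   the nonzero points of mB^n and >= k-1 at 0, and the monomials of P_1 are
   bounded by admissible vectors, so P_1 satisfies both requirements.
   For uniqueness, the products B_s of b_{s_i div (m+1), s_i mod (m+1)} form a
   triangular basis, so a reduced D = P_1 - Q is a combination of the B_s with s
   admissible. For s of minimal weight with nonzero coefficient, the derivative
   of order (s_i div (m+1))_i at the point (m - s_i mod (m+1))_i kills every
   other B_t occurring in D (since t_i > s_i for some i) but not B_s, and
   admissibility of s puts this order below the multiplicity prescribed at that
   point; hence D = 0. *)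

From HB Require Import structures.
From mathcomp Require Import all_boot all_order all_algebra.
From mathcomp Require Import mpoly.
From mathcomp Require Import ring zify.
Set Implicit Arguments. Unset Strict Implicit. Unset Printing Implicit Defensive.
Import Order.TTheory GRing.Theory Num.Theory.
Local Open Scope ring_scope.

Lemma eq_from_leq_sum (I : finType) (u v : I -> nat) :
  (forall i, u i <= v i)%N -> (\sum_i v i <= \sum_i u i)%N -> u =1 v.
Proof.
move=> le_uv le_vu i; have [_ eq_sum] := leqif_sum (P := xpredT) (fun i _ => leqif_eq (le_uv i)).
have : (\sum_i u i == \sum_i v i)%N by rewrite eqn_leq le_vu leq_sum.
by rewrite eq_sum => /forallP/(_ i)/eqP.
Qed.

Section PolyVar.
Variables (R : comNzRingType) (n : nat).
Implicit Types (G : 'I_n -> {poly R}).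

Lemma mpolyC_commr_X (i : 'I_n) : commr_rmorph (@mpolyC n R) 'X_i.
Proof. by move=> c; rewrite /GRing.comm mulrC. Qed.

Definition pvar (i : 'I_n) : {poly R} -> {mpoly R[n]} :=
  horner_morph (mpolyC_commr_X i).

HB.instance Definition _ (i : 'I_n) :=
  GRing.RMorphism.copy (pvar i) (horner_morph (mpolyC_commr_X i)).

Lemma pvarX i : pvar i 'X = 'X_i. Proof. exact: horner_morphX. Qed.

Lemma pvarC i c : pvar i c%:P = c%:MP. Proof. exact: horner_morphC. Qed.

Lemma pvarZ i c p : pvar i (c *: p) = c *: pvar i p.
Proof. by rewrite -mul_polyC rmorphM /= pvarC mul_mpolyC. Qed.

Lemma pvar_ffact i p j : pvar i (ffact p j) = ffact (pvar i p) j.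
Proof. by rewrite rmorph_prod; apply: eq_bigr => t _; rewrite rmorphB rmorph_nat. Qed.

Lemma meval_pvar i p (x : 'I_n -> R) : (pvar i p).@[x] = p.[x i].
Proof.
elim/poly_ind: p => [|p c IH]; first by rewrite rmorph0 meval0 horner0.
by rewrite rmorphD rmorphM /= pvarX pvarC mevalD mevalM IH mevalXU mevalC hornerMXaddC.
Qed.

Lemma mderiv_pvar j i p :
  mderiv j (pvar i p) = if i == j then pvar i p^`() else 0.
Proof.
elim/poly_ind: p => [|p c IH]; first by rewrite deriv0 rmorph0 mderiv0 if_same.
rewrite rmorphD rmorphM /= pvarX pvarC mderivD mderivM mderivC addr0 IH.
rewrite derivMXaddC mderivX mnm1E; case: (eqVneq i j) => [<-|_]; last first.
  by rewrite scale0r mul0r mulr0 add0r.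
by rewrite -[X in (X - _)%MM]add0m addmK mpolyX0 scale1r mulr1 rmorphD rmorphM /= pvarX addrC.
Qed.

Lemma mderiv_prod_pvar j G :
  mderiv j (\prod_i pvar i (G i)) =
  \prod_i pvar i (if i == j then (G i)^`() else G i).
Proof.
have mderiv_other : mderiv j (\prod_(i | i != j) pvar i (G i)) = 0.
  elim/big_ind: _ => [|p q dp dq|i /negbTE ne_ij]; last by rewrite mderiv_pvar ne_ij.
    by rewrite -mpolyC1 mderivC.
  by rewrite mderivM dp dq mulr0 mul0r addr0.
rewrite (bigD1 j) //= mderivM mderiv_other mulr0 addr0 mderiv_pvar eqxx.
rewrite [RHS](bigD1 j) //= eqxx; congr (_ * _).
by apply: eq_bigr => i /negbTE ->.
Qed.

Lemma mderivm_prod_pvar (a : 'X_{1..n}) G :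
  mderivm a (\prod_i pvar i (G i)) = \prod_i pvar i ((G i)^`(a i)).
Proof.
have count_a (i : 'I_n) : count_mem i (flatten [seq nseq (a j) j | j <- enum 'I_n]) = a i.
  rewrite count_flatten sumnE !big_map -/(index_enum _) (bigD1 i) //= count_nseq /= eqxx mul1n.
  by rewrite big1 ?addn0 // => j ne_ji; rewrite count_nseq /= (negbTE ne_ji).
rewrite mderivm_foldr; under [RHS]eq_bigr do rewrite -count_a.
elim: (flatten _) => [//|j s IHs] /=.
rewrite IHs mderiv_prod_pvar; apply: eq_bigr => i _.
by case: (eqVneq i j) => [->|ne_ij]; rewrite ?eqxx ?derivnS // eq_sym (negbTE ne_ij).
Qed.

Lemma meval_prod_pvar G (x : 'I_n -> R) :
  (\prod_i pvar i (G i)).@[x] = \prod_i (G i).[x i].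
Proof. by rewrite rmorph_prod; apply: eq_bigr => i _; apply: meval_pvar. Qed.
End PolyVar.

Section RootMultiplicity.
Variable R : comNzRingType.
Implicit Types (a : R) (u : {poly R}).

Lemma derivn_XsubC_expM a u s j : (j <= s)%N ->
  exists2 w, (('X - a%:P) ^+ s * u)^`(j) = ('X - a%:P) ^+ (s - j) * w
           & w.[a] = (s ^_ j)%:R * u.[a].
Proof.
elim: j => [_|j IHj lt_js]; first by exists u; rewrite ?derivn0 ?subn0 ?ffactn0 ?mul1r.
have [w Dw w_a] := IHj (ltnW lt_js).
exists ((s - j)%:R *: w + ('X - a%:P) * w^`()).
  rewrite derivnS Dw derivM deriv_exp derivXsubC mul1r -(subnSK lt_js) /=.
  by rewrite exprS scaler_nat mulrDr mulrnAr -mulrnAl mulrA [(_ - a%:P) * _]mulrC.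
rewrite hornerD hornerM hornerXsubC subrr mul0r addr0 hornerZ w_a.
by rewrite mulrA -natrM ffactnSr mulnC.
Qed.

Lemma horner_derivn_XsubC_expM_lt a u s j : (j < s)%N ->
  ((('X - a%:P) ^+ s * u)^`(j)).[a] = 0.
Proof.
move=> lt_js; have [w -> _] := derivn_XsubC_expM a u (ltnW lt_js).
by rewrite hornerM horner_exp hornerXsubC subrr expr0n subn_eq0 leqNgt lt_js mul0r.
Qed.

Lemma horner_derivn_XsubC_expM a u s :
  ((('X - a%:P) ^+ s * u)^`(s)).[a] = s`!%:R * u.[a].
Proof.
have [w -> w_a] := derivn_XsubC_expM a u (leqnn s).
by rewrite subnn expr0 mul1r w_a ffactnn.
Qed.
End RootMultiplicity.

Section FallingFactorial.
Variable R : comNzRingType.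

Lemma ffact_XsubC (a : R) j :
  ffact ('X - a%:P) j = \prod_(t < j) ('X - (a + t%:R)%:P).
Proof. by apply: eq_bigr => t _; rewrite rmorphD /= polyC_natr opprD addrA. Qed.

Lemma monic_ffact_XsubC (a : R) j : ffact ('X - a%:P) j \is monic.
Proof. by rewrite ffact_XsubC monic_prod_XsubC. Qed.

Lemma size_ffact_XsubC (a : R) j : size (ffact ('X - a%:P) j) = j.+1.
Proof.
by rewrite ffact_XsubC size_prod_XsubC [index_enum _]unlock -enumT size_enum_ord.
Qed.
End FallingFactorial.

Section Bpoly.
Variables (R : numDomainType) (m : nat).

Definition bpoly (l r : nat) : {poly R} :=
  ffact 'X m.+1 ^+ l * ffact ('X + (r%:R - m.+1%:R)%:P) r.

Let XE : ('X : {poly R}) = 'X - 0%:P. Proof. by rewrite subr0. Qed.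
Let XaddE (c : R) : ('X : {poly R}) + c%:P = 'X - (- c)%:P.
Proof. by rewrite polyCN opprK. Qed.

Lemma bpoly_monic l r : bpoly l r \is monic.
Proof.
rewrite /bpoly monicMl; first by rewrite XaddE monic_ffact_XsubC.
by rewrite monic_exp // XE monic_ffact_XsubC.
Qed.

Lemma size_bpoly l r : size (bpoly l r) = (m.+1 * l + r).+1.
Proof.
have ffX_monic : ffact ('X : {poly R}) m.+1 \is monic by rewrite XE monic_ffact_XsubC.
have size_ffXl : size (ffact ('X : {poly R}) m.+1 ^+ l) = (m.+1 * l).+1.
  rewrite -[LHS]prednK ?size_poly_gt0 ?monic_neq0 ?monic_exp // size_exp.
  by rewrite XE size_ffact_XsubC mulnC.
have ffc_neq0 : ffact ('X + (r%:R - m.+1%:R)%:P : {poly R}) r != 0.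
  by rewrite -size_poly_gt0 XaddE size_ffact_XsubC.
by rewrite /bpoly size_monicM ?monic_exp // size_ffXl XaddE size_ffact_XsubC addnS.
Qed.

Lemma size_bpoly_subXn l r :
  (size (bpoly l r - 'X^(m.+1 * l + r))%R <= m.+1 * l + r)%N.
Proof.
apply/leq_sizeP => j; rewrite leq_eqVlt coefB coefXn => /predU1P[<-|lt_dj].
  by move/monicP: (bpoly_monic l r); rewrite lead_coefE size_bpoly => ->; rewrite eqxx subrr.
by rewrite nth_default ?size_bpoly // (gtn_eqF lt_dj) subrr.
Qed.

Lemma ffactX_factor p : (p <= m)%N ->
  exists2 g, ffact ('X : {poly R}) m.+1 = ('X - p%:R%:P) * g & g.[p%:R] != 0.
Proof.
move=> le_pm; pose t0 : 'I_m.+1 := Ordinal (le_pm : (p < m.+1)%N).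
exists (\prod_(t < m.+1 | t != t0) ('X - t%:R)).
  by rewrite /ffact (bigD1 t0) //= polyC_natr.
rewrite horner_prod; apply/prodf_neq0 => t ne_tt0.
rewrite -polyC_natr hornerXsubC subr_eq0 eqr_nat eq_sym.
by apply: contraNneq ne_tt0 => eq_tp; apply/eqP/val_inj.
Qed.

Lemma ffact_shift_factor r p : (r <= m)%N -> (p <= m)%N -> (m - r < p)%N ->
  exists h, ffact ('X + (r%:R - m.+1%:R)%:P : {poly R}) r = ('X - p%:R%:P) * h.
Proof.
move=> le_rm le_pm lt_p; have lt_t0r : (p + r - m.+1 < r)%N by lia.
pose t0 : 'I_r := Ordinal lt_t0r.
exists (\prod_(t < r | t != t0) ('X + (r%:R - m.+1%:R)%:P - t%:R)).
rewrite /ffact (bigD1 t0) //= -addrA -polyC_natr -polyCB -polyCN natrB; last by lia.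
by congr (('X + _%:P) * _); rewrite natrD; ring.
Qed.

Lemma horner_ffact_shift r : (r <= m)%N ->
  (ffact ('X + (r%:R - m.+1%:R)%:P : {poly R}) r).[(m - r)%:R] != 0.
Proof.
move=> le_rm; rewrite horner_prod; apply/prodf_neq0 => t _.
rewrite hornerD hornerN hornerD hornerX hornerC -polyC_natr hornerC natrB //.
have -> : m%:R - r%:R + (r%:R - m.+1%:R) - t%:R = - (t.+1)%:R :> R.
  by rewrite -[m.+1]addn1 -[t.+1]addn1 !natrD; ring.
by rewrite oppr_eq0 pnatr_eq0.
Qed.

Lemma bpoly_root l r p : (r <= m)%N -> (p <= m)%N ->
  exists q, bpoly l r = ('X - p%:R%:P) ^+ (l + (m - r < p)%N) * q.
Proof.
move=> le_rm le_pm; have [g Dg _] := ffactX_factor le_pm.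
rewrite /bpoly Dg exprMn; case: (ltnP (m - r) p) => [lt_p|_].
  have [h ->] := ffact_shift_factor le_rm le_pm lt_p.
  by exists (g ^+ l * h); rewrite addn1 exprS; ring.
by exists (g ^+ l * ffact ('X + (r%:R - m.+1%:R)%:P) r); rewrite addn0; ring.
Qed.

Lemma bpoly_root_exact l r : (r <= m)%N ->
  exists2 u, bpoly l r = ('X - (m - r)%:R%:P) ^+ l * u & u.[(m - r)%:R] != 0.
Proof.
move=> le_rm; have [g Dg g_neq0] := ffactX_factor (leq_subr r m).
exists (g ^+ l * ffact ('X + (r%:R - m.+1%:R)%:P) r); first by rewrite /bpoly Dg exprMn mulrA.
by rewrite hornerM horner_exp mulf_neq0 ?expf_neq0 ?horner_ffact_shift.
Qed.
End Bpoly.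

Section ZeroMultiplicity.
Variables (R : realFieldType) (n : nat).
Implicit Types (Q : {mpoly R[n]}) (x : 'I_n -> R).

Lemma has_zero_multB Q1 Q2 x K : has_zero_mult Q1 x K -> has_zero_mult Q2 x K ->
  has_zero_mult (Q1 - Q2) x K.
Proof. by move=> z1 z2 al lt_alK; rewrite mderivmB mevalB z1 // z2 // subr0. Qed.

Lemma has_zero_multZ c Q x K : has_zero_mult Q x K -> has_zero_mult (c *: Q) x K.
Proof. by move=> zQ al lt_alK; rewrite mderivmZ mevalZ zQ // mulr0. Qed.

Lemma has_zero_mult_sum (I : finType) (P : pred I) (F : I -> {mpoly R[n]}) x K :
  (forall i, P i -> has_zero_mult (F i) x K) ->
  has_zero_mult (\sum_(i | P i) F i) x K.
Proof.
move=> zF al lt_alK; rewrite raddf_sum rmorph_sum big1 // => i Pi.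
exact: zF.
Qed.

Lemma meval_mderivm_prod_pvar_eq0 (G : 'I_n -> {poly R}) x (al : 'X_{1..n}) i s q :
  G i = ('X - (x i)%:P) ^+ s * q -> (al i < s)%N ->
  (mderivm al (\prod_j pvar j (G j))).@[x] = 0.
Proof.
move=> DGi lt_al_s; rewrite mderivm_prod_pvar meval_prod_pvar (bigD1 i) //=.
by rewrite DGi horner_derivn_XsubC_expM_lt ?mul0r.
Qed.

Lemma has_zero_mult_prod_pvar (G : 'I_n -> {poly R}) x (mu : 'I_n -> nat) K :
  (forall i, exists q, G i = ('X - (x i)%:P) ^+ mu i * q) ->
  (K <= \sum_i mu i)%N ->
  has_zero_mult (\prod_i pvar i (G i)) x K.
Proof.
move=> Gmu le_K al lt_alK.
have [i lt_al_mu] : exists i, (al i < mu i)%N.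
  apply/existsP; apply: contraLR lt_alK; rewrite negb_exists -leqNgt mdegE.
  move=> /forallP ge_al; apply: leq_trans le_K _; apply: leq_sum => i _.
  by rewrite leqNgt ge_al.
have [q Dq] := Gmu i; exact: meval_mderivm_prod_pvar_eq0 Dq lt_al_mu.
Qed.

Lemma has_zero_mult_prod_bpoly m (l r p : 'I_n -> nat) K :
  (forall i, r i <= m)%N -> (forall i, p i <= m)%N ->
  (K <= \sum_i (l i + (m - r i < p i)))%N ->
  has_zero_mult (\prod_i pvar i (bpoly R m (l i) (r i))) (fun i => (p i)%:R) K.
Proof. by move=> le_rm le_pm; apply: has_zero_mult_prod_pvar => i; apply: bpoly_root. Qed.
End ZeroMultiplicity.

Section SupportBound.
Variables (R : comNzRingType) (n : nat).

Definition mbounded (d : 'X_{1..n}) (Q : {mpoly R[n]}) : bool :=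
  all (fun e => e <= d)%MM (msupp Q).

Lemma mboundedC d c : mbounded d c%:MP.
Proof.
apply/allP => e; rewrite msuppC; case: eqP => // _; rewrite inE => /eqP ->.
by apply/mnm_lepP => i; rewrite mnm0E.
Qed.

Lemma mboundedD d Q1 Q2 : mbounded d Q1 -> mbounded d Q2 -> mbounded d (Q1 + Q2).
Proof.
move=> /allP b1 /allP b2; apply/allP => e /msuppD_le.
by rewrite mem_cat => /orP[/b1|/b2].
Qed.

Lemma mboundedM d1 d2 Q1 Q2 :
  mbounded d1 Q1 -> mbounded d2 Q2 -> mbounded (d1 + d2) (Q1 * Q2).
Proof.
move=> /allP b1 /allP b2; apply/allP => e /msuppM_le /allpairsP[[e1 e2] [/= e1Q1 e2Q2 ->]].
move/mnm_lepP: (b1 _ e1Q1) => le1; move/mnm_lepP: (b2 _ e2Q2) => le2.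
by apply/mnm_lepP => i; rewrite !mnmDE leq_add.
Qed.

Lemma mbounded_pvar i (G : {poly R}) : mbounded (U_(i) *+ (size G).-1) (pvar i G).
Proof.
elim/poly_ind: G => [|G c IH]; first by rewrite rmorph0 -mpolyC0 mboundedC.
rewrite rmorphD rmorphM /= pvarX pvarC mboundedD ?mboundedC //.
have [-> | G_neq0] := eqVneq G 0; first by rewrite rmorph0 !mul0r -mpolyC0 mboundedC.
have size_G_gt0 : (0 < size G)%N by rewrite size_poly_gt0.
rewrite size_MXaddC (negbTE G_neq0) /= -(prednK size_G_gt0) mulmSr.
have bX : mbounded U_(i) 'X_i by rewrite /mbounded msuppX /= lepm_refl.
by rewrite mboundedM.
Qed.

Lemma mbounded_prod_pvar (G : 'I_n -> {poly R}) :
  mbounded [multinom (size (G i)).-1 | i < n] (\prod_i pvar i (G i)).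
Proof.
rewrite [X in mbounded X]multinomUE_id; under eq_bigr do rewrite mnmE.
elim/big_rec2: _ => [|i d Q _ bQ]; last by rewrite mboundedM ?mbounded_pvar.
by rewrite -mpolyC1 mboundedC.
Qed.
End SupportBound.

Section Admissible.
Variables (n m k : nat).
Implicit Types (s t : 'I_n -> nat).

Definition admissible s : bool :=
  (\sum_i s i <= degbound n m k)%N && (\sum_i s i %/ m.+1 < k)%N.

Lemma admissible_le s t : (forall i, s i <= t i)%N -> admissible t -> admissible s.
Proof.
move=> le_st /andP[deg_t blocks_t]; apply/andP; split.
  by apply: leq_trans deg_t; apply: leq_sum.
by apply: leq_ltn_trans blocks_t; apply: leq_sum => i _; apply: leq_div2r.
Qed.

Lemma divn_mulDr_small l r : (r <= m)%N -> ((m.+1 * l + r) %/ m.+1)%N = l.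
Proof. by move=> le_rm; rewrite mulnC divnMDl // divn_small ?addn0. Qed.

Lemma not_admissible_cases (l r : 'I_n -> nat) : (0 < k)%N -> (forall i, r i <= m)%N ->
  ~~ admissible (fun i => m.+1 * l i + r i)%N ->
  (k <= \sum_i l i)%N \/ ((\sum_i l i = k - 1)%N /\ forall i, r i = m).
Proof.
move=> k_gt0 le_rm; rewrite /admissible.
have -> : (\sum_i (m.+1 * l i + r i) %/ m.+1 = \sum_i l i)%N.
  by apply: eq_bigr => i _; apply: divn_mulDr_small.
rewrite negb_and -!ltnNge ltnS => /orP[lt_deg|]; last by left.
have [|lt_Lk] := leqP k (\sum_i l i); [by left | right].
rewrite big_split -big_distrr /= /degbound in lt_deg.
have le_S : (\sum_(i < n) r i <= m * n)%N.
  by rewrite mulnC -[n in (n * m)%N]card_ord -sum_nat_const leq_sum.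
set L := (\sum_i l i)%N in lt_Lk lt_deg *; set S := (\sum_(i < n) r i)%N in le_S lt_deg.
have DL : L = (k - 1)%N.
  have : (m.+1 * (k - 1) <= m.+1 * L)%N.
    by move: lt_deg le_S; move: (m.+1 * _)%N (m.+1 * _)%N (m * n)%N => ? ? ?; lia.
  by rewrite leq_pmul2l //; lia.
have le_mn_S : (m * n <= S)%N.
  by move: lt_deg; rewrite DL; move: (m.+1 * _)%N (m * n)%N => ? ?; lia.
split=> //; apply: eq_from_leq_sum => [i|]; first exact: le_rm.
by rewrite sum_nat_const card_ord mulnC.
Qed.

Lemma admissible_blocks_at_zero s : (1 < k)%N -> admissible s ->
  (forall i, s i %% m.+1 = m)%N -> (\sum_i s i %/ m.+1 < k - 1)%N.
Proof.
move=> k_gt1 /andP[deg_s _] s_mod.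
have Ds : (\sum_i s i = (\sum_i s i %/ m.+1) * m.+1 + m * n)%N.
  rewrite big_distrl [(m * n)%N]mulnC -[n in (n * m)%N]card_ord -sum_nat_const /=.
  by rewrite -big_split; apply: eq_bigr => i _; rewrite {1}(divn_eq (s i) m.+1) s_mod.
rewrite -(ltn_pmul2r (ltn0Sn m)); move: deg_s; rewrite Ds /degbound.
have : (0 < m.+1 * (k - 1))%N by rewrite muln_gt0 subn_gt0.
by lia.
Qed.
End Admissible.

Section MonomialBlocks.
Variables (n d : nat).
Implicit Types (e : 'X_{1..n}).

Lemma mnm_blocks_le k (idx : 'I_k -> 'I_n) e :
  (\sum_(j < k) U_(idx j) *+ d.+1 <= e)%MM -> (k <= \sum_i e i %/ d.+1)%N.
Proof.
move/mnm_lepP => le_e; rewrite -[k in (k <= _)%N]card_ord -sum1_card.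
apply: (@leq_trans (\sum_i \sum_(j < k) (idx j == i))); last first.
  apply: leq_sum => i _; rewrite leq_divRL // big_distrl /=.
  apply: leq_trans (le_e i); rewrite mnm_sumE; apply: leq_sum => j _.
  by rewrite mulmnE mnm1E.
rewrite exchange_big /=; apply: leq_sum => j _.
by rewrite (bigD1 (idx j)) //= eqxx leq_addr.
Qed.

Lemma mnm_blocks_ge k e : (k <= \sum_i e i %/ d.+1)%N ->
  exists idx : 'I_k -> 'I_n, (\sum_(j < k) U_(idx j) *+ d.+1 <= e)%MM.
Proof.
elim: k e => [|k IHk] e le_ke.
  exists (fun j : 'I_0 => match notF (ltn_ord j) with end).
  by rewrite big_ord0; apply/mnm_lepP => i; rewrite mnm0E.
have [i0 le_d_ei0] : exists i0, (d.+1 <= e i0)%N.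
  apply/existsP; apply: contraLR le_ke; rewrite negb_exists => /forallP lt_e.
  by rewrite -ltnNge big1 // => i _; rewrite divn_small // ltnNge lt_e.
have le_Ue : (U_(i0) *+ d.+1 <= e)%MM.
  by apply/mnm_lepP => i; rewrite mulmnE mnm1E; case: eqP => [<-|_]; rewrite ?mul1n.
pose e' := (e - U_(i0) *+ d.+1)%MM.
have blocks_e : (\sum_i e i %/ d.+1 = (\sum_i e' i %/ d.+1).+1)%N.
  rewrite -(submK le_Ue) -/e' (bigD1 i0) // [in RHS](bigD1 i0) //= -addSn; congr (_ + _)%N.
    by rewrite mnmDE mulmnE mnm1E eqxx mul1n divnDr // divnn addn1.
  apply: eq_bigr => i ne_ii0; rewrite mnmDE mulmnE mnm1E eq_sym (negbTE ne_ii0).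
  by rewrite mul0n addn0.
have [idx' le_idx'] : exists idx' : 'I_k -> 'I_n, (\sum_(j < k) U_(idx' j) *+ d.+1 <= e')%MM.
  by apply: IHk; rewrite -ltnS -blocks_e.
exists (fun j => if unlift ord0 j is Some j' then idx' j' else i0).
rewrite big_ord_recl unlift_none -(submK le_Ue) -/e' addmC.
rewrite (eq_bigr (fun j => U_(idx' j) *+ d.+1)%MM) => [|j _]; last by rewrite liftK.
apply/mnm_lepP => i; rewrite !mnmDE leq_add2r.
by move/mnm_lepP: le_idx'.
Qed.

Lemma mnm_blocksP k e :
  (exists idx : 'I_k -> 'I_n, (\sum_(j < k) U_(idx j) *+ d.+1 <= e)%MM)
  <-> (k <= \sum_i e i %/ d.+1)%N.
Proof. by split=> [[idx /mnm_blocks_le]|/mnm_blocks_ge]. Qed.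
End MonomialBlocks.

Lemma reducedP (R : realFieldType) n m k (Q : {mpoly R[n]}) :
  reduced m k Q <-> {in msupp Q, forall e : 'X_{1..n}, admissible m k e}.
Proof.
split=> [redQ e /redQ[deg_e no_blocks] | admQ e /admQ/andP[deg_e blocks_e]].
  rewrite /admissible -mdegE deg_e ltnNge /=; apply/negP => /mnm_blocksP[idx].
  by apply/negP.
rewrite mdegE; split=> // idx; apply/negP => /mnm_blocks_le.
by rewrite leqNgt blocks_e.
Qed.


Section Expansion.
Variables (R : realFieldType) (n m k : nat) (a0 : R) (a : nat -> nat -> R).
Hypothesis ha : coeff_identity m k a0 a.

Local Notation index := ('I_(qk m k).+1 * 'I_m.+1)%type.

Definition valid_index (F : {ffun 'I_n -> index}) : bool :=
  [forall i, ((F i).1 == 0 :> nat) ==> ((F i).2 == m :> nat)].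

Definition index_deg (F : {ffun 'I_n -> index}) (i : 'I_n) : nat :=
  (m.+1 * (F i).1 + (F i).2)%N.

Definition expansion_term (F : {ffun 'I_n -> index}) : {mpoly R[n]} :=
  (\prod_i choice_coef a0 a (F i).1 (F i).2)
    *: \prod_i pvar i (bpoly R m (F i).1 (F i).2).

Lemma term_pvar (i : 'I_n) l r : term R m i l r = pvar i (bpoly R m l r).
Proof. by apply/esym; rewrite /bpoly rmorphM rmorphXn /= !pvar_ffact rmorphD /= pvarX pvarC. Qed.

(* The pair (0, m) carries a_{k,0,m}, as [bpoly 0 m = (x - 1)_m]. *)
Let coef (x : index) : R :=
  if x.1 == 0 :> nat then (if x.2 == m :> nat then a0 else 0) else a x.1 x.2.

Lemma ffact_XsubC_expE : ffact ('X - 1) m ^+ k = \sum_x coef x *: bpoly R m x.1 x.2.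
Proof.
rewrite ha -(pair_bigA _ (fun l r => coef (l, r) *: bpoly R m l r)) /= big_ord_recl /=.
congr (_ + _); last by rewrite big_add1 /= big_mkord.
rewrite (bigD1 ord_max) //= /coef /= eqxx big1 ?addr0 => [|r /negbTE ne_rm]; last first.
  by rewrite -val_eqE /= in ne_rm; rewrite ne_rm scale0r.
by rewrite /bpoly expr0 mul1r -[m.+1]addn1 natrD opprD addrA subrr add0r polyCN polyC1.
Qed.

Lemma Ppoly_expansion :
  Ppoly R n m k = \sum_(F | valid_index F) expansion_term F.
Proof.
have -> : Ppoly R n m k = \prod_i pvar i (ffact ('X - 1) m ^+ k).
  by apply: eq_bigr => i _; apply/esym; rewrite rmorphXn /= pvar_ffact rmorphB /= pvarX rmorph1.
under eq_bigr do rewrite ffact_XsubC_expE rmorph_sum /=.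
under eq_bigr do under eq_bigr do rewrite pvarZ.
rewrite bigA_distr_bigA /= (bigID valid_index) /= [X in _ + X]big1 ?addr0 => [|F].
  apply: eq_bigr => F valid_F; rewrite scaler_prod; congr (_ *: _).
  apply: eq_bigr => i _; rewrite /coef /choice_coef; case: ifP => // l_eq0.
  by move/forallP: valid_F => /(_ i); rewrite l_eq0 => /eqP ->; rewrite eqxx.
rewrite negb_forall => /existsP[i]; rewrite negb_imply => /andP[l_eq0 r_neqm].
by rewrite scaler_prod (bigD1 i) //= /coef l_eq0 (negbTE r_neqm) mul0r scale0r.
Qed.

Lemma admissible_index_deg F : (0 < k)%N ->
  admissible m k (index_deg F) =
  (\sum_i (F i).1 <= k - 1)%N && (\sum_i index_deg F i <= degbound n m k)%N.
Proof.
move=> k_gt0; rewrite /admissible andbC.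
have -> : (\sum_i index_deg F i %/ m.+1 = \sum_i (F i).1)%N.
  by apply: eq_bigr => i _; rewrite divn_mulDr_small // -ltnS.
by congr (_ && _); apply/idP/idP; lia.
Qed.

Lemma P1poly_expansion : (0 < k)%N ->
  P1poly n m k a0 a =
  \sum_(F | valid_index F && admissible m k (index_deg F)) expansion_term F.
Proof.
move=> k_gt0; apply: eq_big => [F|F _]; first by rewrite admissible_index_deg // andbA.
by congr (_ *: _); apply: eq_bigr => i _; rewrite term_pvar.
Qed.

Lemma Ppoly_sub_P1poly : (0 < k)%N ->
  Ppoly R n m k - P1poly n m k a0 a =
  \sum_(F | valid_index F && ~~ admissible m k (index_deg F)) expansion_term F.
Proof.
move=> k_gt0; rewrite Ppoly_expansion P1poly_expansion //.
by rewrite (bigID (fun F => admissible m k (index_deg F))) /= addrC addrK.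
Qed.

Lemma P1poly_reduced : (0 < k)%N -> reduced m k (P1poly n m k a0 a).
Proof.
move=> k_gt0; apply/reducedP => e; rewrite P1poly_expansion //.
move=> /msupp_sum_le/flattenP[_ /mapP[F F_in ->] /msuppZ_le e_in].
move: F_in; rewrite mem_filter => /andP[/andP[_ adm_F] _].
have /allP/(_ e e_in)/mnm_lepP le_e := mbounded_prod_pvar (fun i => bpoly R m (F i).1 (F i).2).
apply: admissible_le adm_F => i; move: (le_e i).
by rewrite mnmE size_bpoly.
Qed.

Lemma P1poly_interp : (1 < k)%N -> interp_cond m k (P1poly n m k a0 a).
Proof.
move=> k_gt1; have k_gt0 := ltnW k_gt1.
have zero_mult_bad (p : 'I_n -> nat) K : (forall i, p i <= m)%N ->
    (forall l r : 'I_n -> nat, (forall i, r i <= m)%N ->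
       ~~ admissible m k (fun i => m.+1 * l i + r i)%N ->
       (K <= \sum_i (l i + (m - r i < p i)))%N) ->
    has_zero_mult (Ppoly R n m k - P1poly n m k a0 a) (fun i => (p i)%:R) K.
  move=> le_pm order_bad; rewrite Ppoly_sub_P1poly //.
  apply: has_zero_mult_sum => F /andP[_ bad_F]; apply: has_zero_multZ.
  have le_rm i : ((F i).2 <= m)%N by rewrite -ltnS.
  by apply: has_zero_mult_prod_bpoly => //; apply: order_bad.
split=> [p [i0 p_i0] | ].
  apply: zero_mult_bad => [i|l r le_rm bad]; first by rewrite -ltnS.
  rewrite big_split /=.
  case: (not_admissible_cases k_gt0 le_rm bad) => [le_kl|[-> r_m]].
    exact: leq_trans le_kl (leq_addr _ _).
  rewrite (bigD1 i0) //= r_m subnn lt0n p_i0 /=; lia.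
apply: (zero_mult_bad (fun _ => 0%N)) => // l r le_rm bad.
rewrite big_split /=; apply: leq_trans (leq_addr _ _).
by case: (not_admissible_cases k_gt0 le_rm bad) => [|[-> _]] //; apply: leq_trans; rewrite leq_subr.
Qed.
End Expansion.

Section SpanOn.
Variables (R : idomainType) (V : lmodType R) (I : finType) (B : I -> V).
Implicit Types (P Q : I -> Prop) (v w : V).

Definition span_on P v :=
  exists2 c : I -> R, (forall i, c i != 0 -> P i) & v = \sum_i c i *: B i.

Lemma span_on0 P : span_on P 0.
Proof. by exists (fun=> 0) => [i|]; rewrite ?eqxx // big1 // => i _; rewrite scale0r. Qed.

Lemma span_onD P v w : span_on P v -> span_on P w -> span_on P (v + w).
Proof.
move=> [c Pc ->] [d Pd ->]; exists (fun i => c i + d i) => [i|].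
  by have [c0|/Pc//] := eqVneq (c i) 0; rewrite c0 add0r; apply: Pd.
by rewrite -big_split; apply: eq_bigr => i _; rewrite scalerDl.
Qed.

Lemma span_onZ P x v : span_on P v -> span_on P (x *: v).
Proof.
move=> [c Pc ->]; exists (fun i => x * c i) => [i|].
  by rewrite mulf_eq0 negb_or => /andP[_ /Pc].
by rewrite scaler_sumr; apply: eq_bigr => i _; rewrite scalerA.
Qed.

Lemma span_on_sum P (J : Type) (r : seq J) (PJ : pred J) (F : J -> V) :
  (forall j, PJ j -> span_on P (F j)) -> span_on P (\sum_(j <- r | PJ j) F j).
Proof. by move=> spanF; elim/big_ind: _ => //; [apply: span_on0 | apply: span_onD]. Qed.

Lemma span_on_sub P Q v : (forall i, P i -> Q i) -> span_on P v -> span_on Q v.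
Proof. by move=> PQ [c Pc ->]; exists c => // i /Pc/PQ. Qed.

Lemma span_on_gen P i : P i -> span_on P (B i).
Proof.
move=> Pi; exists (fun j => (j == i)%:R) => [j|].
  by case: (boolP (j == i)) => [/eqP->|_] //; rewrite eqxx.
by rewrite (bigD1 i) //= eqxx scale1r big1 ?addr0 // => j /negbTE->; rewrite scale0r.
Qed.
End SpanOn.

Lemma span_on_prod_pvar (R : numDomainType) n N (b : 'I_N -> {poly R})
    (P : 'I_n -> 'I_N -> Prop) (G : 'I_n -> {poly R}) :
  (forall i, span_on b (P i) (G i)) ->
  span_on (fun f : {ffun 'I_n -> 'I_N} => \prod_i pvar i (b (f i)))
          (fun f => forall i, P i (f i)) (\prod_i pvar i (G i)).
Proof.
move=> /fin_all_exists2[c cP DG]; exists (fun f : {ffun 'I_n -> 'I_N} => \prod_i c i (f i)).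
  by move=> f /prodf_neq0 c_neq0 i; apply: cP; apply: c_neq0.
under eq_bigr do rewrite DG rmorph_sum /=; under eq_bigr do under eq_bigr do rewrite pvarZ.
by rewrite bigA_distr_bigA; apply: eq_bigr => f _; rewrite scaler_prod.
Qed.

Section TriangularBasis.
Variables (R : numDomainType) (m : nat).

Definition bbasis (s : nat) : {poly R} := bpoly R m (s %/ m.+1) (s %% m.+1).

Definition mbasis n (s : 'I_n -> nat) : {mpoly R[n]} := \prod_i pvar i (bbasis (s i)).

Lemma Xn_span_bbasis N s : (s < N)%N ->
  span_on (fun t : 'I_N => bbasis t) (fun t => t <= s)%N 'X^s.
Proof.
elim/ltn_ind: s => s IHs lt_sN.
have lt_bbasis : (size (bbasis s - 'X^s)%R <= s)%N.
  by have := size_bpoly_subXn R m (s %/ m.+1) (s %% m.+1); rewrite mulnC -divn_eq.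
have span_bs : span_on (fun t : 'I_N => bbasis t) (fun t => t <= s)%N (bbasis s).
  exact: (span_on_gen (fun t : 'I_N => bbasis t) (leqnn s : (Ordinal lt_sN <= s)%N)).
have -> : 'X^s = bbasis s + (-1) *: (bbasis s - 'X^s) by rewrite scaleN1r subKr.
apply: (span_onD span_bs); apply: span_onZ.
rewrite -[bbasis s - _]coefK poly_def; apply: span_on_sum => t _.
apply: span_onZ; have lt_ts : (t < s)%N := leq_trans (ltn_ord t) lt_bbasis.
apply: span_on_sub (IHs t lt_ts (ltn_trans lt_ts lt_sN)) => u /leq_trans; apply.
exact: ltnW.
Qed.

Lemma mpolyX_span_mbasis n N (e : 'X_{1..n}) : (forall i, e i < N)%N ->
  span_on (fun f : {ffun 'I_n -> 'I_N} => mbasis (fun i => f i))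
          (fun f => forall i, f i <= e i)%N 'X_[e].
Proof.
move=> lt_eN; rewrite mpolyXE_id; under eq_bigr do rewrite -pvarX -rmorphXn.
exact: span_on_prod_pvar (fun i => Xn_span_bbasis (lt_eN i)).
Qed.
End TriangularBasis.

(* For a < b, [bbasis b] vanishes at m - a mod (m+1) to order > a div (m+1). *)
Lemma lt_vanishing_order m a b : (a < b)%N ->
  (a %/ m.+1 < b %/ m.+1 + (m - b %% m.+1 < m - a %% m.+1))%N.
Proof.
move=> lt_ab; have Da := divn_eq a m.+1; have Db := divn_eq b m.+1.
have := ltn_pmod a (ltn0Sn m); have := ltn_pmod b (ltn0Sn m).
move: (a %/ m.+1)%N (b %/ m.+1)%N (a %% m.+1)%N (b %% m.+1)%N Da Db.
move=> la lb ra rb Da Db lt_rb lt_ra; case: (ltnP ra rb) => [lt_r|le_r].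
  have -> : (m - rb < m - ra)%N by lia.
  rewrite addn1 ltnS leqNgt; apply/negP => lt_l.
  have : (lb.+1 * m.+1 <= la * m.+1)%N by rewrite leq_mul2r lt_l orbT.
  by rewrite mulSn; lia.
have -> : (m - rb < m - ra)%N = false by apply/negbTE; rewrite -leqNgt; lia.
rewrite addn0 ltnNge; apply/negP => le_l.
have : (lb * m.+1 <= la * m.+1)%N by rewrite leq_mul2r le_l orbT.
by lia.
Qed.

Section Uniqueness.
Variables (R : realFieldType) (n m k : nat).
Implicit Types (s t : 'I_n -> nat).

Definition detect_order s : 'X_{1..n} := [multinom s i %/ m.+1 | i < n].

Definition detect_point s : 'I_n -> R := fun i => (m - s i %% m.+1)%:R.

Lemma mdeg_detect_order s : mdeg (detect_order s) = (\sum_i s i %/ m.+1)%N.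
Proof. by rewrite mdegE; apply: eq_bigr => i _; rewrite mnmE. Qed.

Lemma detect_mbasis_other s t i : (s i < t i)%N ->
  (mderivm (detect_order s) (mbasis R m t)).@[detect_point s] = 0.
Proof.
move=> lt_st; have le_rm : (t i %% m.+1 <= m)%N by rewrite -ltnS ltn_pmod.
have [q Dq] := bpoly_root R (t i %/ m.+1) le_rm (leq_subr (s i %% m.+1) m).
by apply: meval_mderivm_prod_pvar_eq0 Dq _; rewrite mnmE lt_vanishing_order.
Qed.

Lemma detect_mbasis_self s :
  (mderivm (detect_order s) (mbasis R m s)).@[detect_point s] != 0.
Proof.
rewrite mderivm_prod_pvar meval_prod_pvar; apply/prodf_neq0 => i _; rewrite mnmE.
have le_rm : (s i %% m.+1 <= m)%N by rewrite -ltnS ltn_pmod.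
have [u Du u_neq0] := bpoly_root_exact R (s i %/ m.+1) le_rm.
by rewrite /bbasis Du horner_derivn_XsubC_expM mulf_neq0 // pnatr_eq0 -lt0n fact_gt0.
Qed.

Lemma detect_min_neq0 N (C : {ffun 'I_n -> 'I_N} -> R) f0 : C f0 != 0 ->
  (forall f, C f != 0 -> (\sum_i f0 i <= \sum_i f i)%N) ->
  (mderivm (detect_order (fun i => f0 i))
     (\sum_f C f *: mbasis R m (fun i => f i))).@[detect_point (fun i => f0 i)] != 0.
Proof.
move=> Cf0 f0_min; rewrite raddf_sum rmorph_sum (bigD1 f0) //= big1 ?addr0 => [|f ne_ff0].
  by rewrite mderivmZ mevalZ mulf_neq0 // detect_mbasis_self.
rewrite mderivmZ mevalZ; have [->|Cf] := eqVneq (C f) 0; first by rewrite mul0r.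
have [i lt_i] : exists i, (f0 i < f i)%N.
  apply/existsP; apply: contraNT ne_ff0; rewrite negb_exists => /forallP ge_f.
  apply/eqP/ffunP => i; apply: val_inj; apply: eq_from_leq_sum (f0_min f Cf) i.
  by move=> j; rewrite leqNgt ge_f.
by rewrite (detect_mbasis_other (t := fun j => f j) lt_i) mulr0.
Qed.

Local Notation N := (degbound n m k).+1.

Lemma reduced_span_mbasis (D : {mpoly R[n]}) :
  {in msupp D, forall e : 'X_{1..n}, admissible m k e} ->
  span_on (fun f : {ffun 'I_n -> 'I_N} => mbasis R m (fun i => f i))
          (fun f => admissible m k (fun i => f i)) D.
Proof.
move=> admD; rewrite (mpolyE D) big_seq; apply: span_on_sum => e /admD adm_e.
have lt_eN i : (e i < N)%N.
  have /andP[deg_e _] := adm_e; rewrite ltnS; apply: leq_trans deg_e.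
  by rewrite (bigD1 i) //= leq_addr.
apply: span_onZ; apply: (span_on_sub _ (mpolyX_span_mbasis R m lt_eN)) => f le_fe.
exact: admissible_le adm_e.
Qed.

Lemma span_mbasis_interp_eq0 (D : {mpoly R[n]}) : (1 < k)%N ->
  span_on (fun f : {ffun 'I_n -> 'I_N} => mbasis R m (fun i => f i))
          (fun f => admissible m k (fun i => f i)) D ->
  (forall p : 'I_n -> 'I_m.+1, (exists i, p i != 0 :> nat) ->
     has_zero_mult D (fun i => (p i)%:R) k) ->
  has_zero_mult D (fun _ => 0) (k - 1) -> D = 0.
Proof.
move=> k_gt1 [C C_adm ->] zero_mult zero_mult0.
have [f1 Cf1|C0] := pickP (fun f => C f != 0); last first.
  by rewrite big1 // => f _; move/negbFE: (C0 f) => /eqP->; rewrite scale0r.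
have [f0 Cf0 f0_min] := @arg_minnP _ f1 (fun f => C f != 0) (fun f => \sum_i (f i : nat))%N Cf1.
have := detect_min_neq0 Cf0 f0_min; set s0 := fun i => (f0 i : nat).
have /andP[_ blocks_f0] := C_adm f0 Cf0.
have [/existsP[i0 s0i0_neq_m]|/existsPn s0_m] := boolP [exists i, s0 i %% m.+1 != m]%N.
  have lt_p i : (m - s0 i %% m.+1 < m.+1)%N by rewrite ltnS leq_subr.
  rewrite (zero_mult (fun i => Ordinal (lt_p i))) ?eqxx ?mdeg_detect_order //.
  exists i0; rewrite /= subn_eq0 -ltnNge ltn_neqAle s0i0_neq_m.
  by rewrite -ltnS ltn_pmod.
have at_zero : detect_point s0 =1 (fun _ => 0).
  by move=> i; rewrite /detect_point (eqP (negbNE (s0_m i))) subnn.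
rewrite (meval_eq _ at_zero) zero_mult0 ?eqxx // mdeg_detect_order.
apply: (admissible_blocks_at_zero k_gt1 (C_adm f0 Cf0)) => i.
by move: (s0_m i); rewrite negbK => /eqP.
Qed.
End Uniqueness.

Theorem lemma6p2 (R : realFieldType) (n m k : nat)
    (hm : (1 <= m)%N) (hn : (1 <= n)%N) (hk : (2 <= k)%N)
    (a0 : R) (a : nat -> nat -> R)
    (ha : coeff_identity m k a0 a) :
  reduced m k (P1poly n m k a0 a)
  /\ interp_cond m k (P1poly n m k a0 a)
  /\ (forall Q : {mpoly R[n]}, reduced m k Q -> interp_cond m k Q ->
        Q = P1poly n m k a0 a).
Proof.
set P1 := P1poly n m k a0 a.
have P1_red : reduced m k P1 by apply: P1poly_reduced; apply: ltnW.
have [P1_nz P1_z] : interp_cond m k P1 by apply: P1poly_interp.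
split=> //; split=> // Q Q_red [Q_nz Q_z].
have DPQ : P1 - Q = (Ppoly R n m k - Q) - (Ppoly R n m k - P1) by ring.
apply/esym/subr0_eq/(span_mbasis_interp_eq0 (m := m) hk).
- move/reducedP: P1_red => P1_adm; move/reducedP: Q_red => Q_adm.
  by apply: reduced_span_mbasis => e /msuppB_le; rewrite mem_cat => /orP[/P1_adm|/Q_adm].
- by move=> p p_nz; rewrite DPQ; apply: has_zero_multB; [apply: Q_nz | apply: P1_nz].
- by rewrite DPQ; apply: has_zero_multB.
Qed.
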